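(* Suppose $l,m,j$ are integers with $m>0$, $|l|\le m/2$, $|j|\le m/8$. Then $$\mathbb{P}\{S_{2m}=2j+2l\mid S_{4m}=4l\}=2\sqrt{\frac{1}{2\pi m(1-(l/m)^2)}}\;\exp\Big\{-\frac{(2j)^2}{2m(1-(l/m)^2)}+O\Big(\frac1m\Big)+O\Big(\frac{j^4}{m^3}\Big)\Big\},$$ where the $O(\cdot)$ terms are bounded in absolute value by a universal constant times the indicated quantities, uniformly over all such $l,m,j$.
   Context: $S_n$ is simple random walk on $\mathbb{Z}$ started at $0$, with i.i.d. steps equal to $\pm1$ with probability $1/2$ each. *)

From Stdlib Require Import Reals ZArith.
From mathcomp Require Import all_boot.

Set Implicit Arguments.
Unset Strict Implicit.
Unset Printing Implicit Defensive.

(* Simple random walk up to time n: the sample space is the set of step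
   sequences w : 'I_n -> bool (true = +1, false = -1), with the uniform
   probability (i.i.d. fair +-1 steps). *)
Definition Omega (n : nat) := {ffun 'I_n -> bool}.

Definition S (n : nat) (k : nat) (w : Omega n) : Z :=
  \big[Z.add/0%Z]_(i < n | (i < k)%N) (if w i then 1%Z else (-1)%Z).

Definition Pr (n : nat) (A : pred (Omega n)) : R :=
  Rdiv (INR #|A|) (pow (IZR 2) n).

Definition CondPr (n : nat) (A B : pred (Omega n)) : R :=
  Rdiv (Pr (predI A B)) (Pr B).

#[global] Open Scope R_scope.

From Stdlib Require Import Reals Lra Lia ZArith.
From mathcomp Require Import all_boot zify.
From Coquelicot Require Import Coquelicot.

Set Implicit Arguments.
Unset Strict Implicit.
Unset Printing Implicit Defensive.

(* Given S_{4m} = 4l, the set of up-steps is a uniform (2m+2l)-subset of the 4m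
   steps, so the conditional probability is the hypergeometric ratio
   C(2m, m+l+j) C(2m, m+l-j) / C(4m, 2m+2l).  Stirling's formula
   ln n! = (n + 1/2) ln n - n + ln(2 pi)/2 + O(1/n) is proved with an explicit
   error: the remainder changes by at most 1/(4n^2) from n to n+1, and its limit
   ln(2 pi)/2 is read off Wallis' bounds on C(2n, n)/4^n.  Applied to the eight
   factorials of the ratio, it leaves the Gaussian exponent
   -(j^2/(m+l) + j^2/(m-l)) together with the terms
   (A + j + 1/2) ln(1 + j/A) + (A - j + 1/2) ln(1 - j/A) - j^2/A for A = m +- l,
   which the third-order Taylor expansion of ln(1+u) bounds by O(1/m + j^4/m^3). *)

Lemma INR_addn m n : INR (m + n) = INR m + INR n.
Proof. exact: plus_INR. Qed.

Lemma INR_muln m n : INR (m * n) = INR m * INR n.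
Proof. exact: mult_INR. Qed.

Lemma INR_subn m n : (n <= m)%N -> INR (m - n) = INR m - INR n.
Proof. by move=> /leP; exact: minus_INR. Qed.

Lemma INR_double n : INR (2 * n) = 2 * INR n.
Proof. by rewrite INR_muln /=; lra. Qed.

Lemma INR_gt0 n : (0 < n)%N -> 0 < INR n.
Proof. by move=> n_gt0; apply: lt_0_INR; apply/ltP. Qed.

Lemma INR_ge1 n : (0 < n)%N -> 1 <= INR n.
Proof. by move=> n_gt0; apply: (le_INR 1); apply/leP. Qed.

Lemma pow4_ge0 x : 0 <= x ^ 4.
Proof. by rewrite (_ : 4 = 2 * 2)%nat // pow_mult; apply: pow2_ge_0. Qed.

Lemma INR_fact_gt0 n : 0 < INR n`!.
Proof. exact/INR_gt0/fact_gt0. Qed.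

(** * Reduction to binomial coefficients *)

Lemma sum_steps_count (T : Type) (r : seq T) (P w : pred T) :
  \big[Z.add/0%Z]_(i <- r | P i) (if w i then 1%Z else (-1)%Z)
  = (2 * Z.of_nat (count (predI P w) r) - Z.of_nat (count P r))%Z.
Proof.
elim: r => [|x r IHr]; first by rewrite big_nil.
have -> : count (predI P w) (x :: r) = ((P x && w x) + count (predI P w) r)%N by [].
have -> : count P (x :: r) = (P x + count P r)%N by [].
rewrite big_cons IHr; move: (count _ r) (count _ r) => a b.
by case: (P x); case: (w x); cbn [andb nat_of_bool]; lia.
Qed.

Lemma S_card n k (w : Omega n) :
  S k w = (2 * Z.of_nat #|[set i : 'I_n | (i < k)%N && w i]|
           - Z.of_nat #|[set i : 'I_n | (i < k)%N]|)%Z.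
Proof.
by rewrite /S sum_steps_count !cardsE !cardE /enum_mem !size_filter [index_enum _]unlock.
Qed.

Lemma card_ord_lt n k : (k <= n)%N -> #|[set i : 'I_n | (i < k)%N]| = k.
Proof.
move=> k_le_n.
have -> : [set i : 'I_n | (i < k)%N] = widen_ord k_le_n @: [set: 'I_k].
  apply/setP => i; rewrite inE; apply/idP/imsetP => [i_lt_k | [j _ ->]].
    by exists (Ordinal i_lt_k); rewrite ?inE //; apply: val_inj.
  by rewrite /= ltn_ord.
rewrite card_imset ?cardsT ?card_ord //.
by move=> a b /(congr1 val) /= /val_inj.
Qed.

Definition up_steps {n} (w : Omega n) : {set 'I_n} := [set i | w i].

Lemma card_Omega n (P : pred (Omega n)) (Q : pred {set 'I_n}) :
  (forall w, P w = Q (up_steps w)) -> #|P| = #|[set A | Q A]|.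
Proof.
move=> PQ.
have -> : #|P| = #|up_steps @^-1: [set A | Q A]| by apply: eq_card => w; rewrite !inE -PQ.
apply/on_card_preimset/onW_bij.
exists (fun A : {set 'I_n} => [ffun i => i \in A] : Omega n) => [w | A].
- by apply/ffunP => i; rewrite ffunE inE.
- by apply/setP => i; rewrite inE ffunE.
Qed.

Lemma card_split_draws (T : finType) (F : {set T}) p q :
  #|[set A : {set T} | (#|A :&: F| == p) && (#|A :&: ~: F| == q)]|
  = ('C(#|F|, p) * 'C(#|~: F|, q))%N.
Proof.
set draws := fun (G : {set T}) k => [set X : {set T} | X \subset G & #|X| == k].
have -> : [set A : {set T} | (#|A :&: F| == p) && (#|A :&: ~: F| == q)] =
          (fun A => (A :&: F, A :&: ~: F)) @^-1: setX (draws F p) (draws (~: F) q).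
  by apply/setP => A; rewrite !inE !subsetIr.
rewrite on_card_preimset; first by rewrite cardsX !cards_draws.
exists (fun XY => XY.1 :|: XY.2) => [A _ | [X Y]]; first by rewrite /= -setDE setID.
rewrite !inE => /andP [/andP [XF _] /andP [YF _]] /=.
have XFc : X :&: ~: F = set0 by apply/eqP; rewrite setI_eq0 disjoints_subset setCK.
have YF0 : Y :&: F = set0 by apply/eqP; rewrite setI_eq0 disjoints_subset.
by rewrite !setIUl (setIidPl XF) (setIidPl YF) XFc YF0 setU0 set0U.
Qed.

Lemma S_prefix n k (w : Omega n) : (k <= n)%N ->
  S k w = (2 * Z.of_nat #|up_steps w :&: [set i : 'I_n | (i < k)%N]| - Z.of_nat k)%Z.
Proof.
move=> k_le_n; rewrite S_card card_ord_lt //.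
suff -> : [set i : 'I_n | (i < k)%N && w i] = up_steps w :&: [set i : 'I_n | (i < k)%N] by [].
by apply/setP => i; rewrite !inE andbC.
Qed.

Lemma S_full n (w : Omega n) : S n w = (2 * Z.of_nat #|up_steps w| - Z.of_nat n)%Z.
Proof.
rewrite S_prefix //; suff -> : [set i : 'I_n | (i < n)%N] = setT by rewrite setIT.
by apply/setP => i; rewrite !inE ltn_ord.
Qed.

Lemma condpr_binomial m (l j : Z) p1 p2 :
  Z.of_nat p1 = (Z.of_nat m + l + j)%Z -> Z.of_nat p2 = (Z.of_nat m + l - j)%Z ->
  (p1 + p2 <= 4 * m)%N ->
  CondPr (fun w : Omega (4 * m) => (S (2 * m) w =? 2 * j + 2 * l)%Z)
         (fun w : Omega (4 * m) => (S (4 * m) w =? 4 * l)%Z)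
  = INR ('C(2 * m, p1) * 'C(2 * m, p2)) / INR 'C(4 * m, p1 + p2).
Proof.
move=> p1E p2E p12_le.
set F := [set i : 'I_(4 * m) | (i < 2 * m)%N].
have card_F : #|F| = (2 * m)%N by rewrite card_ord_lt //; lia.
have card_Fc : #|~: F| = (2 * m)%N by move: (cardsC F); rewrite card_ord card_F; lia.
have split_card (A : {set 'I_(4 * m)}) : #|A| = (#|A :&: F| + #|A :&: ~: F|)%N.
  by rewrite -(cardsID F A) setDE.
have joint : #|predI (fun w : Omega (4 * m) => (S (2 * m) w =? 2 * j + 2 * l)%Z)
                     (fun w : Omega (4 * m) => (S (4 * m) w =? 4 * l)%Z)|
             = ('C(2 * m, p1) * 'C(2 * m, p2))%N.
  rewrite (@card_Omega _ _ (fun A => (#|A :&: F| == p1) && (#|A :&: ~: F| == p2))).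
    by rewrite card_split_draws card_F card_Fc.
  move=> w; rewrite [predI _ _ _]/(_ && _) S_prefix; last lia.
  rewrite S_full -/F (split_card (up_steps w)).
  move: #|_ :&: F| #|_ :&: ~: F| => x y.
  by apply/andP/andP => [[/Z.eqb_spec ? /Z.eqb_spec ?] | [/eqP ? /eqP ?]];
     split; solve [apply/eqP; lia | apply/Z.eqb_spec; lia].
have marginal : #|(fun w : Omega (4 * m) => (S (4 * m) w =? 4 * l)%Z)| = 'C(4 * m, p1 + p2).
  rewrite (@card_Omega _ _ (fun A => #|A| == (p1 + p2)%N)).
    by rewrite card_draws card_ord.
  by move=> w; rewrite S_full; apply/Z.eqb_spec/eqP => ?; lia.
rewrite /CondPr /Pr joint marginal; field; split.
- by apply/not_0_INR/eqP; rewrite -lt0n bin_gt0.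
- by apply: pow_nonzero; lra.
Qed.

(** * Wallis integrals *)

Definition wallis n := RInt (fun x => sin x ^ n) 0 (PI / 2).

Lemma ex_RInt_sin_pow n : ex_RInt (fun x => sin x ^ n) 0 (PI / 2).
Proof.
apply: ex_RInt_continuous => x _.
by apply: ex_derive_continuous; auto_derive.
Qed.

Lemma wallis0 : wallis 0 = PI / 2.
Proof. by rewrite /wallis RInt_const /scal /= /mult /=; lra. Qed.

Lemma wallis1 : wallis 1 = 1.
Proof.
apply: is_RInt_unique.
have -> : 1 = minus (- cos (PI / 2)) (- cos 0).
  by rewrite /minus /plus /opp /= cos_PI2 cos_0; lra.
apply: (@is_RInt_derive _ (fun x => - cos x)) => x _.
- by auto_derive => //; ring.
- by apply: ex_derive_continuous; auto_derive.
Qed.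

Lemma wallis_rec n : INR n.+2 * wallis n.+2 = INR n.+1 * wallis n.
Proof.
set F := fun x => - cos x * sin x ^ n.+1.
set f := fun x => INR n.+2 * sin x ^ n.+2 - INR n.+1 * sin x ^ n.
have dF : is_RInt f 0 (PI / 2) (minus (F (PI / 2)) (F 0)).
  apply: is_RInt_derive => x _; rewrite /F /f.
  - auto_derive => //.
    change (match n with 0%N => 1 | _.+1 => INR n + 1 end) with (INR n.+1).
    have := sin2_cos2 x; rewrite /Rsqr => sc.
    apply: Rminus_diag_uniq; rewrite !S_INR /=.
    transitivity ((1 - (sin x * sin x + cos x * cos x)) * ((INR n + 1) * sin x ^ n)).
      ring.
    by rewrite sc; ring.
  - by apply: ex_derive_continuous; auto_derive.
have lin : is_RInt f 0 (PI / 2) (INR n.+2 * wallis n.+2 - INR n.+1 * wallis n).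
  by apply: is_RInt_minus; apply: is_RInt_scal; apply: RInt_correct; apply: ex_RInt_sin_pow.
have : minus (F (PI / 2)) (F 0) = 0.
  by rewrite /F cos_PI2 cos_0 sin_0 /minus /plus /opp /=; ring.
rewrite -(is_RInt_unique _ _ _ _ dF) (is_RInt_unique _ _ _ _ lin).
lra.
Qed.

Lemma wallis_decr n : wallis n.+1 <= wallis n.
Proof.
have pi_gt0 := PI_RGT_0.
apply: RInt_le; rewrite ?/wallis; try apply: ex_RInt_sin_pow; first lra.
move=> x x_in; have := SIN_bound x.
have : 0 <= sin x by apply: sin_ge_0; lra.
have : 0 <= sin x ^ n by apply: pow_le; apply: sin_ge_0; lra.
rewrite /=; nra.
Qed.

Definition central_ratio n := INR (2 * n)`! / (4 ^ n * INR n`! ^ 2).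

Lemma central_ratio_gt0 n : 0 < central_ratio n.
Proof.
apply: Rdiv_lt_0_compat; first exact: INR_fact_gt0.
by apply: Rmult_lt_0_compat; apply: pow_lt; [lra | exact: INR_fact_gt0].
Qed.

Lemma central_ratio_S n :
  central_ratio n.+1 = central_ratio n * (2 * INR n + 1) / (2 * INR n + 2).
Proof.
rewrite /central_ratio; have -> : (2 * n.+1 = (2 * n).+2)%N by lia.
rewrite !factS !INR_muln !S_INR INR_double /=.
have := INR_fact_gt0 n; have := INR_fact_gt0 (2 * n); have := pos_INR n.
have := pow_lt 4 n ltac:(lra).
by move=> *; field; repeat split; lra.
Qed.

Lemma wallis_even_odd n :
  wallis (2 * n) = PI / 2 * central_ratio n /\
  wallis (2 * n).+1 = 1 / ((2 * INR n + 1) * central_ratio n).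
Proof.
elim: n => [|n [IHeven IHodd]].
  by rewrite muln0 wallis0 wallis1 /central_ratio /=; split; field.
have n_ge0 := pos_INR n; have c_gt0 := central_ratio_gt0 n.
have -> : (2 * n.+1 = (2 * n).+2)%N by lia.
move: (wallis_rec (2 * n)) (wallis_rec (2 * n).+1).
rewrite IHeven IHodd central_ratio_S !S_INR INR_double => rec_even rec_odd.
split.
- apply: (Rmult_eq_reg_l (2 * INR n + 1 + 1)); last lra.
  by rewrite rec_even; field; lra.
- apply: (Rmult_eq_reg_l (2 * INR n + 1 + 1 + 1)); last lra.
  by rewrite rec_odd; field; lra.
Qed.

Lemma central_ratio_sq_ge n : 2 / (PI * (2 * INR n + 1)) <= central_ratio n ^ 2.
Proof.
have [even odd] := wallis_even_odd n; have decr := wallis_decr (2 * n).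
rewrite even odd in decr.
have c_gt0 := central_ratio_gt0 n; have n_ge0 := pos_INR n; have pi_gt0 := PI_RGT_0.
have odd_gt0 : 0 < (2 * INR n + 1) * central_ratio n by nra.
have key : 1 <= PI / 2 * central_ratio n * ((2 * INR n + 1) * central_ratio n).
  have := Rmult_le_compat_r _ _ _ (Rlt_le _ _ odd_gt0) decr.
  by rewrite /Rdiv Rmult_1_l Rinv_l; lra.
apply: (Rmult_le_reg_l (PI * (2 * INR n + 1))); first nra.
by rewrite /Rdiv; field_simplify; nra.
Qed.

Lemma central_ratio_sq_le n : (0 < n)%N -> central_ratio n ^ 2 <= 1 / (PI * INR n).
Proof.
case: n => [//|n] _.
have [_ odd] := wallis_even_odd n; have [even _] := wallis_even_odd n.+1.
have decr := wallis_decr (2 * n).+1.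
have double_S : ((2 * n).+2 = 2 * n.+1)%N by lia.
rewrite double_S even odd in decr.
have c_gt0 := central_ratio_gt0 n; have c1_gt0 := central_ratio_gt0 n.+1.
have n_ge0 := pos_INR n; have pi_gt0 := PI_RGT_0.
have step : (2 * INR n + 1) * central_ratio n = (2 * INR n + 2) * central_ratio n.+1.
  by rewrite central_ratio_S; field; lra.
rewrite step in decr.
have even_gt0 : 0 < (2 * INR n + 2) * central_ratio n.+1 by nra.
have key : PI / 2 * central_ratio n.+1 * ((2 * INR n + 2) * central_ratio n.+1) <= 1.
  have := Rmult_le_compat_r _ _ _ (Rlt_le _ _ even_gt0) decr.
  by rewrite /Rdiv Rmult_1_l Rinv_l; lra.
rewrite S_INR.
apply: (Rmult_le_reg_l (PI * (INR n + 1))); first nra.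
by rewrite /Rdiv; field_simplify; nra.
Qed.

(** * Stirling's formula with explicit error *)

Lemma ln1p_ge u : 0 <= u -> u - u ^ 2 / 2 <= ln (1 + u).
Proof.
move=> u_ge0; case: (Req_dec u 0) => [->|u_neq0].
  by rewrite Rplus_0_r ln_1; lra.
set f := fun x => ln (1 + x) - x + x ^ 2 / 2.
have [c [mvt c_in]] : exists c, f u - f 0 = c ^ 2 / (1 + c) * (u - 0) /\ 0 < c < u.
  apply: (MVT_cor2 f (fun c => c ^ 2 / (1 + c))) => [|c c_in]; first lra.
  by apply/is_derive_Reals; rewrite /f; auto_derive; [lra | field; lra].
have : 0 <= c ^ 2 / (1 + c) * (u - 0).
  by apply: Rmult_le_pos; [apply: Rdiv_le_0_compat; nra | lra].
by move: mvt; rewrite /f Rplus_0_r ln_1; lra.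
Qed.

Lemma ln1p_le u : 0 <= u -> ln (1 + u) <= u - u ^ 2 / 2 + u ^ 3 / 3.
Proof.
move=> u_ge0; case: (Req_dec u 0) => [->|u_neq0].
  by rewrite Rplus_0_r ln_1; lra.
set f := fun x => x - x ^ 2 / 2 + x ^ 3 / 3 - ln (1 + x).
have [c [mvt c_in]] : exists c, f u - f 0 = c ^ 3 / (1 + c) * (u - 0) /\ 0 < c < u.
  apply: (MVT_cor2 f (fun c => c ^ 3 / (1 + c))) => [|c c_in]; first lra.
  by apply/is_derive_Reals; rewrite /f; auto_derive; [lra | field; lra].
have : 0 <= c ^ 3 / (1 + c) * (u - 0).
  by apply: Rmult_le_pos; [apply: Rdiv_le_0_compat; nra | lra].
by move: mvt; rewrite /f Rplus_0_r ln_1; lra.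
Qed.

Lemma MVT_abs_le f f' u M :
  (forall c, Rabs c <= Rabs u -> derivable_pt_lim f c (f' c)) ->
  (forall c, Rabs c <= Rabs u -> Rabs (f' c) <= M) ->
  Rabs (f u - f 0) <= M * Rabs u.
Proof.
move=> df bound.
have in_ball c : Rmin 0 u <= c <= Rmax 0 u -> Rabs c <= Rabs u.
  by rewrite /Rmin /Rmax; case: Rle_dec => _ c_in; rewrite /Rabs;
     repeat case: Rcase_abs; lra.
have [c [-> c_in]] := MVT_abs f f' 0 u (fun c c_in => df c (in_ball c c_in)).
rewrite Rminus_0_r; apply: Rmult_le_compat_r; first exact: Rabs_pos.
exact: bound (in_ball c c_in).
Qed.

Lemma ln1p_taylor3 u :
  Rabs u <= 1 / 2 -> Rabs (ln (1 + u) - (u - u ^ 2 / 2 + u ^ 3 / 3)) <= 2 * u ^ 4.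
Proof.
move=> u_small.
set f := fun x => ln (1 + x) - (x - x ^ 2 / 2 + x ^ 3 / 3).
have -> : ln (1 + u) - (u - u ^ 2 / 2 + u ^ 3 / 3) = f u - f 0.
  by rewrite /f Rplus_0_r ln_1; field.
have -> : 2 * u ^ 4 = 2 * Rabs u ^ 3 * Rabs u.
  have -> : 2 * Rabs u ^ 3 * Rabs u = 2 * (Rabs u ^ 2) ^ 2 by ring.
  by rewrite pow2_abs; ring.
apply: (@MVT_abs_le f (fun c => - c ^ 3 / (1 + c))) => c c_le.
- have /Rabs_le_between c_in : Rabs c <= 1 / 2 by lra.
  by apply/is_derive_Reals; rewrite /f; auto_derive; [lra | field; lra].
- have /Rabs_le_between c_in : Rabs c <= 1 / 2 by lra.
  rewrite Rabs_div; last lra.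
  rewrite Rabs_Ropp -RPow_abs (Rabs_pos_eq (1 + c)); last lra.
  have : Rabs c ^ 3 <= Rabs u ^ 3 by apply: pow_incr; split; [apply: Rabs_pos|].
  have : 0 <= Rabs c ^ 3 by apply: pow_le; apply: Rabs_pos.
  have : / (1 + c) <= 2 by rewrite -(Rinv_inv 2); apply: Rinv_le_contravar; lra.
  have : 0 < / (1 + c) by apply: Rinv_0_lt_compat; lra.
  rewrite /Rdiv; nra.
Qed.

Definition ln_fact n := ln (INR n`!).

Definition stirling_main x := (x + 1 / 2) * ln x - x.

Definition stirling_rem n := ln_fact n - stirling_main (INR n).

Lemma ln_fact_S n : ln_fact n.+1 = ln_fact n + ln (INR n.+1).
Proof.
rewrite /ln_fact factS INR_muln ln_mult; first lra.
- exact: INR_gt0.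
- exact: INR_fact_gt0.
Qed.

Lemma stirling_rem_step n : (0 < n)%N ->
  Rabs (stirling_rem n - stirling_rem n.+1) <= / 4 * (/ INR n) ^ 2.
Proof.
move=> n_gt0; have x_ge1 := INR_ge1 n_gt0; set x := INR n in x_ge1 *.
set u := / x.
have u_gt0 : 0 < u by apply: Rinv_0_lt_compat; lra.
have u_le1 : u <= 1 by rewrite /u -Rinv_1; apply: Rinv_le_contravar; lra.
have xu : x * u = 1 by rewrite /u; field; lra.
have -> : stirling_rem n - stirling_rem n.+1 = (x + 1 / 2) * ln (1 + u) - 1.
  rewrite /stirling_rem /stirling_main ln_fact_S S_INR -/x.
  have -> : x + 1 = x * (1 + u) by rewrite /u; field; lra.
  by rewrite ln_mult ?Rmult_plus_distr_l ?Rmult_1_r ?xu; [ring | lra | lra].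
have lo := Rmult_le_compat_l (x + 1 / 2) _ _ ltac:(lra) (ln1p_ge (Rlt_le _ _ u_gt0)).
have hi := Rmult_le_compat_l (x + 1 / 2) _ _ ltac:(lra) (ln1p_le (Rlt_le _ _ u_gt0)).
have lo_eq : (x + 1 / 2) * (u - u ^ 2 / 2) = 1 - u ^ 2 / 4.
  by rewrite /u; field; lra.
have hi_eq : (x + 1 / 2) * (u - u ^ 2 / 2 + u ^ 3 / 3) = 1 + u ^ 2 / 12 + u ^ 3 / 6.
  by rewrite /u; field; lra.
rewrite lo_eq in lo; rewrite hi_eq in hi.
have : u ^ 3 <= u ^ 2 by rewrite /=; nra.
by move=> *; apply: Rabs_le; nra.
Qed.

Lemma stirling_rem_shift N k : (0 < N)%N ->
  Rabs (stirling_rem N - stirling_rem (N + k)) <= INR k * (/ 4 * (/ INR N) ^ 2).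
Proof.
move=> N_gt0; have N_pos := INR_gt0 N_gt0.
elim: k => [|k IHk].
  by rewrite addn0 Rminus_eq_0 Rabs_R0 /=; lra.
have Nk_gt0 : (0 < N + k)%N by lia.
have step := stirling_rem_step Nk_gt0.
have inv_le : / INR (N + k) <= / INR N.
  by apply: Rinv_le_contravar => //; rewrite INR_addn; have := pos_INR k; lra.
have inv_ge0 : 0 <= / INR (N + k) by apply/Rlt_le/Rinv_0_lt_compat/INR_gt0.
have : (/ INR (N + k)) ^ 2 <= (/ INR N) ^ 2 by apply: pow_incr.
have := Rabs_triang (stirling_rem N - stirling_rem (N + k))
                    (stirling_rem (N + k) - stirling_rem (N + k).+1).
rewrite addnS S_INR.
have -> : stirling_rem N - stirling_rem (N + k) +
          (stirling_rem (N + k) - stirling_rem (N + k).+1) =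
          stirling_rem N - stirling_rem (N + k).+1 by ring.
lra.
Qed.

Lemma stirling_rem_double N : (0 < N)%N ->
  Rabs (stirling_rem N - stirling_rem (2 * N)) <= / 4 * / INR N.
Proof.
move=> N_gt0; have N_pos := INR_gt0 N_gt0.
have := stirling_rem_shift N N_gt0.
have -> : (N + N = 2 * N)%N by lia.
by have -> : INR N * (/ 4 * (/ INR N) ^ 2) = / 4 * / INR N by field; lra.
Qed.

Lemma ln_central_ratio N : (0 < N)%N ->
  ln (central_ratio N) =
  stirling_rem (2 * N) - 2 * stirling_rem N + (ln 2 - ln (INR N)) / 2.
Proof.
move=> N_gt0; have N_pos := INR_gt0 N_gt0.
have fact_pos := INR_fact_gt0 N; have fact2_pos := INR_fact_gt0 (2 * N).
have pow4_pos := pow_lt 4 N ltac:(lra).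
have fact_sq_pos : 0 < INR N`! ^ 2 by apply: pow_lt.
rewrite /central_ratio /Rdiv ln_mult //; last first.
  by apply/Rinv_0_lt_compat/Rmult_lt_0_compat.
rewrite ln_Rinv; last exact: Rmult_lt_0_compat.
rewrite ln_mult // (ln_pow _ 2 fact_pos) (ln_pow 4 N ltac:(lra)).
have -> : ln 4 = 2 * ln 2 by rewrite (_ : 4 = 2 * 2); [rewrite ln_mult; lra | lra].
rewrite /stirling_rem /stirling_main /ln_fact INR_double ln_mult; [|lra|lra].
rewrite /=; field.
Qed.

Lemma stirling_rem_bound N : (0 < N)%N ->
  Rabs (stirling_rem N - ln (2 * PI) / 2) <= / 2 * / INR N.
Proof.
move=> N_gt0; have N_ge1 := INR_ge1 N_gt0; set x := INR N in N_ge1 *.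
have pi_gt0 := PI_RGT_0; have c_gt0 := central_ratio_gt0 N.
have sq_gt0 : 0 < central_ratio N ^ 2 by apply: pow_lt.
have ln_sq : ln (central_ratio N ^ 2) = 2 * ln (central_ratio N).
  by rewrite (ln_pow _ 2 c_gt0) /=; ring.
have up := ln_le _ _ sq_gt0 (central_ratio_sq_le N_gt0).
have lo_gt0 : 0 < 2 / (PI * (2 * x + 1)) by apply: Rdiv_lt_0_compat; nra.
have lo := ln_le _ _ lo_gt0 (central_ratio_sq_ge N).
rewrite ln_sq ln_central_ratio // -/x in up lo.
rewrite ln_div ?ln_1 ?(ln_mult PI x) in up; try nra.
set v := / (2 * x).
have v_gt0 : 0 < v by apply: Rinv_0_lt_compat; lra.
have v_le1 : v <= 1 by rewrite /v -Rinv_1; apply: Rinv_le_contravar; lra.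
have odd_eq : 2 * x + 1 = 2 * (x * (1 + v)) by rewrite /v; field; lra.
rewrite odd_eq ln_div ?(ln_mult PI (2 * _)) ?(ln_mult 2 (x * _)) ?(ln_mult x (1 + v)) in lo;
  try nra.
have ln1p_v : ln (1 + v) <= v by have := ln1p_le (Rlt_le _ _ v_gt0); rewrite /=; nra.
have v_eq : v = / 2 * / x by rewrite /v; field; lra.
have /Rabs_le_between double := stirling_rem_double N_gt0; rewrite -/x in double.
by rewrite (ln_mult 2 PI); [apply: Rabs_le | lra | lra]; lra.
Qed.

Lemma stirling_rem_near M n : 0 < M -> 3 * M / 8 <= INR n ->
  Rabs (stirling_rem n - ln (2 * PI) / 2) <= 2 / M.
Proof.
move=> M_gt0 n_ge; have n_gt0 : (0 < n)%N by case: n n_ge => /= [|n]; [lra | ].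
apply: (Rle_trans _ _ _ (stirling_rem_bound n_gt0)).
have : / INR n <= / (3 * M / 8) by apply: Rinv_le_contravar; lra.
have -> : / (3 * M / 8) = 8 / 3 * / M by field; lra.
have : 0 < / M by apply: Rinv_0_lt_compat.
rewrite /Rdiv; lra.
Qed.

(** * Asymptotics of the hypergeometric ratio *)

Definition entropy_defect A J :=
  (A + J + 1 / 2) * ln (1 + J / A) + (A - J + 1 / 2) * ln (1 - J / A) - J ^ 2 / A.

Lemma entropy_defect_le A J : 0 < A -> Rabs J <= A / 4 ->
  Rabs (entropy_defect A J) <= 6 * (J ^ 4 / A ^ 3) + J ^ 2 / A ^ 2.
Proof.
move=> A_gt0 J_small; set u := J / A.
have /Rabs_le_between u_small : Rabs u <= 1 / 4.
  rewrite /u Rabs_div; last lra.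
  rewrite (Rabs_pos_eq A); last lra.
  by apply: (Rmult_le_reg_r A) => //; rewrite /Rdiv Rmult_assoc Rinv_l; lra.
have /Rabs_le_between err_p := ln1p_taylor3 (ltac:(split_Rabs; lra) : Rabs u <= 1 / 2).
have /Rabs_le_between err_m := ln1p_taylor3 (ltac:(split_Rabs; lra) : Rabs (- u) <= 1 / 2).
set e1 := ln (1 + u) - _ in err_p; set e2 := ln (1 + - u) - _ in err_m.
have u4_ge0 := pow4_ge0 u.
have u2_le : u ^ 2 <= 1 / 16 by rewrite /=; nra.
have u4_le : u ^ 4 <= u ^ 2 / 16.
  by rewrite (_ : u ^ 4 = u ^ 2 * u ^ 2); [nra | ring].
have -> : entropy_defect A J =
          A * (2 * u ^ 4 / 3 + (1 + u) * e1 + (1 - u) * e2) - u ^ 2 / 2 + (e1 + e2) / 2.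
  rewrite /entropy_defect /e1 /e2 -/u (_ : 1 - u = 1 + - u); last ring.
  by rewrite /u; field; lra.
have -> : J ^ 4 / A ^ 3 = A * u ^ 4 by rewrite /u; field; lra.
have -> : J ^ 2 / A ^ 2 = u ^ 2 by rewrite /u; field; lra.
have e1_bound : Rabs ((1 + u) * e1) <= 5 / 2 * u ^ 4.
  rewrite Rabs_mult (Rabs_pos_eq (1 + u)); last lra.
  have : Rabs e1 <= 2 * u ^ 4 by apply: Rabs_le; lra.
  by have := Rabs_pos e1; nra.
have e2_bound : Rabs ((1 - u) * e2) <= 5 / 2 * u ^ 4.
  rewrite Rabs_mult (Rabs_pos_eq (1 - u)); last lra.
  have : Rabs e2 <= 2 * u ^ 4 by apply: Rabs_le; lra.
  by have := Rabs_pos e2; nra.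
move/Rabs_le_between: e1_bound => ?; move/Rabs_le_between: e2_bound => ?.
have main : - (6 * u ^ 4) <= 2 * u ^ 4 / 3 + (1 + u) * e1 + (1 - u) * e2 <= 6 * u ^ 4.
  lra.
apply: Rabs_le; rewrite /= in err_p err_m main u4_le *; nra.
Qed.

Lemma entropy_defect_bound A J M : 0 < M -> M / 2 <= A -> Rabs J <= M / 8 ->
  Rabs (entropy_defect A J) <= 50 * (1 / M + J ^ 4 / M ^ 3).
Proof.
move=> M_gt0 A_ge J_small.
have A_gt0 : 0 < A by lra.
have J_le : Rabs J <= A / 4 by lra.
apply: (Rle_trans _ _ _ (entropy_defect_le A_gt0 J_le)).
have invA : 0 < / A <= 2 / M.
  split; first by apply: Rinv_0_lt_compat; lra.
  by rewrite (_ : 2 / M = / (M / 2)); [apply: Rinv_le_contravar; lra | field; lra].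
have J2 := pow2_ge_0 J.
have J4 := pow4_ge0 J.
have quartic : J ^ 4 / A ^ 3 <= 8 * (J ^ 4 / M ^ 3).
  rewrite /Rdiv -!pow_inv (_ : 8 * (J ^ 4 * (/ M) ^ 3) = J ^ 4 * (2 / M) ^ 3); last first.
    by rewrite /Rdiv; ring.
  by apply: Rmult_le_compat_l => //; apply: pow_incr; lra.
have quadratic : J ^ 2 / A ^ 2 <= 4 * (J ^ 2 / M ^ 2).
  rewrite /Rdiv -!pow_inv (_ : 4 * (J ^ 2 * (/ M) ^ 2) = J ^ 2 * (2 / M) ^ 2); last first.
    by rewrite /Rdiv; ring.
  by apply: Rmult_le_compat_l => //; apply: pow_incr; lra.
have am_gm : 2 * (J ^ 2 / M ^ 2) <= 1 / M + J ^ 4 / M ^ 3.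
  have : 0 <= (1 - J ^ 2 / M) ^ 2 / M by apply: Rdiv_le_0_compat => //; apply: pow2_ge_0.
  have : (1 - J ^ 2 / M) ^ 2 / M = 1 / M + J ^ 4 / M ^ 3 - 2 * (J ^ 2 / M ^ 2).
    by field; lra.
  lra.
lra.
Qed.

Definition log_gauss M A B J :=
  ln 2 - ln (2 * PI) / 2 - (ln A + ln B - ln M) / 2 - (J ^ 2 / A + J ^ 2 / B).

Lemma stirling_main_combination M A B J :
  Rabs J < A -> Rabs J < B -> A + B = 2 * M ->
  2 * stirling_main (2 * M) + stirling_main (2 * A) + stirling_main (2 * B)
  - stirling_main (A + J) - stirling_main (A - J)
  - stirling_main (B + J) - stirling_main (B - J) - stirling_main (4 * M)
  = log_gauss M A B J + ln (2 * PI) / 2 - entropy_defect A J - entropy_defect B J.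
Proof.
move=> /Rabs_def2 [JA1 JA2] /Rabs_def2 [JB1 JB2] AB.
have A_gt0 : 0 < A by lra.
have B_gt0 : 0 < B by lra.
have M_gt0 : 0 < M by lra.
have ln_shift x y : 0 < x -> 0 < x + y -> ln (x + y) = ln x + ln (1 + y / x).
  move=> x_gt0 xy_gt0; rewrite -ln_mult //; last first.
    by rewrite (_ : 1 + y / x = (x + y) / x); [apply: Rdiv_lt_0_compat | field]; lra.
  by congr ln; field; lra.
rewrite /stirling_main /entropy_defect /log_gauss.
have pi_gt0 := PI_RGT_0.
rewrite (ln_mult 2 M) ?(ln_mult 2 A) ?(ln_mult 2 B) ?(ln_mult 4 M) ?(ln_mult 2 PI); try lra.
rewrite (ln_shift A J) ?(ln_shift B J); try lra.
rewrite (ln_shift A (- J)) ?(ln_shift B (- J)); try lra.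
rewrite (_ : 1 + - J / A = 1 - J / A); last by field; lra.
rewrite (_ : 1 + - J / B = 1 - J / B); last by field; lra.
rewrite (_ : ln 4 = 2 * ln 2); last by rewrite (_ : 4 = 2 * 2); [rewrite ln_mult | ]; lra.
rewrite (_ : M = (A + B) / 2); last lra.
by field; lra.
Qed.

Lemma ln_binomial n k : (k <= n)%N ->
  ln (INR 'C(n, k)) = ln_fact n - ln_fact k - ln_fact (n - k).
Proof.
move=> k_le_n; have := bin_fact k_le_n.
have k_pos := INR_fact_gt0 k; have nk_pos := INR_fact_gt0 (n - k).
have bin_pos : 0 < INR 'C(n, k) by apply: INR_gt0; rewrite bin_gt0.
by rewrite /ln_fact => <-; rewrite !INR_muln !ln_mult //; [lra | nra].
Qed.

Lemma ln_binomial_ratio (m p1 p2 : nat) : (p1 <= 2 * m)%N -> (p2 <= 2 * m)%N ->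
  ln (INR ('C(2 * m, p1) * 'C(2 * m, p2)) / INR 'C(4 * m, p1 + p2)) =
  2 * ln_fact (2 * m) + ln_fact (p1 + p2) + ln_fact (4 * m - (p1 + p2))
  - ln_fact p1 - ln_fact (2 * m - p1) - ln_fact p2 - ln_fact (2 * m - p2)
  - ln_fact (4 * m).
Proof.
move=> p1_le p2_le; have p12_le : (p1 + p2 <= 4 * m)%N by lia.
have bin_pos n k : (k <= n)%N -> 0 < INR 'C(n, k).
  by move=> k_le; apply: INR_gt0; rewrite bin_gt0.
move: (bin_pos _ _ p1_le) (bin_pos _ _ p2_le) (bin_pos _ _ p12_le) => *.
rewrite INR_muln ln_div ?ln_mult ?ln_binomial //; first ring.
exact: Rmult_lt_0_compat.
Qed.

Lemma ln_binomial_ratio_approx (m p1 p2 : nat) (A J : R) :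
  (0 < m)%N -> INR p1 = A + J -> INR p2 = A - J ->
  INR m / 2 <= A <= 3 * INR m / 2 -> Rabs J <= INR m / 8 ->
  Rabs (ln (INR ('C(2 * m, p1) * 'C(2 * m, p2)) / INR 'C(4 * m, p1 + p2))
        - log_gauss (INR m) A (2 * INR m - A) J)
  <= 120 * (1 / INR m + J ^ 4 / INR m ^ 3).
Proof.
move=> m_gt0 p1E p2E A_in J_small; have M_gt0 := INR_gt0 m_gt0.
set M := INR m in M_gt0 A_in J_small *; set B := 2 * M - A.
have /Rabs_le_between J_in := J_small.
have E2m : INR (2 * m) = 2 * M by rewrite INR_double.
have E4m : INR (4 * m) = 4 * M by rewrite INR_muln /M /=; ring.
have p1_le : (p1 <= 2 * m)%N by apply/ltnW/ltP/INR_lt; rewrite E2m p1E; lra.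
have p2_le : (p2 <= 2 * m)%N by apply/ltnW/ltP/INR_lt; rewrite E2m p2E; lra.
have E2m_p1 : INR (2 * m - p1) = B - J by rewrite INR_subn // E2m p1E /B; ring.
have E2m_p2 : INR (2 * m - p2) = B + J by rewrite INR_subn // E2m p2E /B; ring.
have Ep12 : INR (p1 + p2) = 2 * A by rewrite INR_addn p1E p2E; ring.
have E4m_p12 : INR (4 * m - (p1 + p2)) = 2 * B.
  by rewrite INR_subn ?E4m ?Ep12 /B; [ring | lia].
have B_ge : M / 2 <= B by rewrite /B; lra.
have near n v : INR n = v -> 3 * M / 8 <= v ->
    - (2 / M) <= stirling_rem n - ln (2 * PI) / 2 <= 2 / M.
  by move=> <- n_ge; apply/Rabs_le_between/stirling_rem_near.
move: (near _ _ E2m ltac:(lra)) (near _ _ E4m ltac:(lra)).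
move: (near _ _ p1E ltac:(lra)) (near _ _ p2E ltac:(lra)).
move: (near _ _ E2m_p1 ltac:(lra)) (near _ _ E2m_p2 ltac:(lra)).
move: (near _ _ Ep12 ltac:(lra)) (near _ _ E4m_p12 ltac:(lra)).
have /Rabs_le_between defect_A := entropy_defect_bound M_gt0 (proj1 A_in) J_small.
have /Rabs_le_between defect_B := entropy_defect_bound M_gt0 B_ge J_small.
have comb := @stirling_main_combination M A B J
  ltac:(split_Rabs; lra) ltac:(split_Rabs; lra) ltac:(rewrite /B; lra).
have J4 : 0 <= J ^ 4 / M ^ 3 by apply: Rdiv_le_0_compat; [apply: pow4_ge0 | apply: pow_lt].
have split_fact n : ln_fact n = stirling_main (INR n) + stirling_rem n.
  by rewrite /stirling_rem; ring.
rewrite ln_binomial_ratio // !split_fact E2m E4m p1E p2E E2m_p1 E2m_p2 Ep12 E4m_p12.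
move=> r1 r2 r3 r4 r5 r6 r7 r8; apply: Rabs_le.
clear -comb defect_A defect_B J4 r1 r2 r3 r4 r5 r6 r7 r8.
split; lra.
Qed.

Lemma INR_of_Z n z : Z.of_nat n = z -> INR n = IZR z.
Proof. by move=> <-; exact: INR_IZR_INZ. Qed.

Lemma IZR_abs_le a z n : (a * Z.abs z <= Z.of_nat n)%Z -> IZR a * Rabs (IZR z) <= INR n.
Proof. by move/IZR_le; rewrite mult_IZR -Rabs_Zabs -INR_IZR_INZ. Qed.

Lemma gauss_form M L J E : 0 < M -> Rabs L < M ->
  2 * sqrt (1 / (2 * PI * M * (1 - (L / M) ^ 2)))
    * exp (- (2 * J) ^ 2 / (2 * M * (1 - (L / M) ^ 2)) + E)
  = exp (log_gauss M (M + L) (M - L) J + E).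
Proof.
move=> M_gt0 /Rabs_def2 [L_lt L_gt]; have pi_gt0 := PI_RGT_0.
have ApB : 0 < (M + L) * (M - L) by apply: Rmult_lt_0_compat; lra.
have -> : 2 * PI * M * (1 - (L / M) ^ 2) = 2 * PI * ((M + L) * (M - L)) / M.
  by field; lra.
have -> : - (2 * J) ^ 2 / (2 * M * (1 - (L / M) ^ 2))
          = - (J ^ 2 / (M + L) + J ^ 2 / (M - L)).
  by field; repeat split; lra.
have K_gt0 : 0 < 2 * PI * ((M + L) * (M - L)) / M.
  by apply: Rdiv_lt_0_compat; nra.
have iK_gt0 : 0 < 1 / (2 * PI * ((M + L) * (M - L)) / M) by apply: Rdiv_lt_0_compat; lra.
have sqrt_gt0 := sqrt_lt_R0 _ iK_gt0.
rewrite -[2 * sqrt _]exp_ln; last by apply: Rmult_lt_0_compat; lra.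
rewrite -exp_plus; congr exp.
rewrite (ln_mult 2); [|lra|lra].
rewrite -Rpower_sqrt // ln_Rpower (ln_div 1); [|lra|lra].
rewrite ln_1 (ln_div (2 * PI * _)); [|nra|lra].
rewrite (ln_mult (2 * PI)); [|lra|lra].
rewrite (ln_mult (M + L)); [|lra|lra].
by rewrite /log_gauss; field; lra.
Qed.

Theorem lemma6 :
  exists C : R, (0 < C) /\
  forall (l j : Z) (m : nat), (0 < m)%N ->
    (2 * Z.abs l <= Z.of_nat m)%Z -> (8 * Z.abs j <= Z.of_nat m)%Z ->
    exists E : R,
      (Rabs E <= C * (1 / INR m + IZR j ^ 4 / INR m ^ 3)) /\
      CondPr (fun w : Omega (4 * m) => (S (2 * m) w =? 2 * j + 2 * l)%Z)
             (fun w : Omega (4 * m) => (S (4 * m) w =? 4 * l)%Z)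
      = (2 * sqrt (1 / (2 * PI * INR m * (1 - (IZR l / INR m) ^ 2)))
           * exp (- (2 * IZR j) ^ 2 / (2 * INR m * (1 - (IZR l / INR m) ^ 2)) + E)).
Proof.
exists 120; split; first lra.
move=> l j m m_gt0 l_le j_le; have M_gt0 := INR_gt0 m_gt0.
have l_small := IZR_abs_le l_le; have j_small := IZR_abs_le j_le.
set p1 := Z.to_nat (Z.of_nat m + l + j); set p2 := Z.to_nat (Z.of_nat m + l - j).
have p1E : Z.of_nat p1 = (Z.of_nat m + l + j)%Z by rewrite /p1; lia.
have p2E : Z.of_nat p2 = (Z.of_nat m + l - j)%Z by rewrite /p2; lia.
rewrite (condpr_binomial p1E p2E); last lia.
have p1R : INR p1 = INR m + IZR l + IZR j.
  by rewrite (INR_of_Z p1E) !plus_IZR -INR_IZR_INZ.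
have p2R : INR p2 = INR m + IZR l - IZR j.
  by rewrite (INR_of_Z p2E) minus_IZR plus_IZR -INR_IZR_INZ.
have A_in : INR m / 2 <= INR m + IZR l <= 3 * INR m / 2 by split_Rabs; lra.
have := ln_binomial_ratio_approx m_gt0 p1R p2R A_in ltac:(lra).
rewrite (_ : 2 * INR m - (INR m + IZR l) = INR m - IZR l); last ring.
move=> approx.
set ratio := _ / _ in approx *.
exists (ln ratio - log_gauss (INR m) (INR m + IZR l) (INR m - IZR l) (IZR j)).
split; first exact: approx.
rewrite gauss_form //; last by lra.
rewrite Rplus_minus exp_ln //.
rewrite /ratio; apply: Rdiv_lt_0_compat; apply: INR_gt0.
  by rewrite muln_gt0 !bin_gt0; apply/andP; split; lia.
by rewrite bin_gt0; lia.
Qed.
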